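(* Let $\mathcal{S}=(Q,E,\delta,Q_0,\Sigma,\ell)$ be a labeled finite-state automaton, $Q_S\subset Q$ a set of secret states, and $K$ a positive integer. Then $\mathcal{S}$ is strongly $K$-step opaque with respect to $Q_S$ if and only if for every state $(q,x)$ reachable in the concurrent composition $\mathrm{CC}(\mathcal{S}_{\varepsilon},\mathcal{S}_{\mathrm{dss\,obs}}^{\varepsilon})$ with $q\in Q_S$, one has $x\neq\emptyset$, and for every run $(q,x)\xrightarrow{s'}(q',x')$ in $\mathrm{CC}(\mathcal{S}_{\varepsilon},\mathcal{S}_{\mathrm{dss\,obs}}^{\varepsilon})$ with $|\ell(s')|\le K$, one has $x'\neq\emptyset$.
   Context: A labeled finite-state automaton (LFSA) is $\mathcal{S}=(Q,E,\delta,Q_0,\Sigma,\ell)$ with finite state set $Q$, finite event alphabet $E$, transition relation $\delta\subset Q\times E\times Q$, initial states $Q_0\subset Q$, finite output alphabet $\Sigma$, and labeling $\ell:E\to\Sigma\cup\{\epsilon\}$ ($\epsilon$ the empty word). $E_o=\{e:\ell(e)\in\Sigma\}$, $E_{uo}=\{e:\ell(e)=\epsilon\}$. Runs $q\xrightarrow{s}q'$ for event words $s$ are defined by chaining transitions (empty word: $q=q'$); $\ell$ extends morphically to words. For $x\subset Q$, $\mathrm{UR}(x)=\{q':\exists q\in x, s\in E_{uo}^*, q\xrightarrow{s}q'\}$. A state is reachable in an automaton if it is initial or is reached by a nonempty run from an initial state. A run is non-secret if none of its states (including first and last) lies in $Q_S$. Strong $K$-step opacity: $\mathcal{S}$ is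 strongly $K$-step opaque w.r.t. $Q_S$ if for every run $q_0\xrightarrow{s_1}q_1\xrightarrow{s_2}q_2$ with $q_0\in Q_0$, $q_1\in Q_S$, $|\ell(s_2)|\le K$, there is a non-secret run $q_0'\xrightarrow{s_1'}q_1'\xrightarrow{s_2'}q_2'$ with $q_0'\in Q_0$, $\ell(s_1)=\ell(s_1')$, $\ell(s_2)=\ell(s_2')$. Concurrent composition: for LFSAs $\mathcal{S}^i=(Q_i,E,\delta_i,Q_{0i},\Sigma,\ell)$, $i=1,2$, $\mathrm{CC}(\mathcal{S}^1,\mathcal{S}^2)$ has states $Q_1\times Q_2$, initial states $Q_{01}\times Q_{02}$, events $\{(e,e'):e,e'\in E_o,\ell(e)=\ell(e')\}\cup\{(e,\epsilon):e\in E_{uo}\}\cup\{(\epsilon,e):e\in E_{uo}\}$, transitions $((q_1,q_1'),(e,e'),(q_2,q_2'))$ iff $(q_1,e,q_2)\in\delta_1,(q_1',e',q_2')\in\delta_2$; $((q_1,q_1'),(e,\epsilon),(q_2,q_1'))$ iff $(q_1,e,q_2)\in\delta_1$; $((q_1,q_1'),(\epsilon,e),(q_1,q_2'))$ iff $(q_1',e,q_2')\in\delta_2$. The label of $(e,e')$ is $\ell(e)$; of $(e,\epsilon),(\epsilon,e)$ it is $\epsilon$; $\ell(s')$ of a word $s'$ of composed events is the concatenation of labels. $\mathcal{S}_{\varepsilon}$: LFSA with states $Q$, initial states $Q_0$, events $\ell(E_o)\cup\{\varepsilon\}$ ($\varepsilon$ a fresh symbol), transition $(q,\ell(e),q')$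 for each $(q,e,q')\in\delta$ with $e\in E_o$ and $(q,\varepsilon,q')$ for each $(q,e,q')\in\delta$ with $e\in E_{uo}$; labeling $\ell'$ = identity on $\ell(E_o)$, $\ell'(\varepsilon)=\epsilon$. $\mathcal{S}_{\mathrm{dss}}$: the accessible part (states reachable from initial states) of the LFSA obtained from $\mathcal{S}$ by deleting all states in $Q_S$ and all transitions incident to them (initial states $Q_0\setminus Q_S$). Its observer $\mathcal{S}_{\mathrm{dss\,obs}}$ is the deterministic automaton with states the subsets of the states of $\mathcal{S}_{\mathrm{dss}}$, alphabet the observable labels, initial state the unobservable reach (within $\mathcal{S}_{\mathrm{dss}}$) of its initial states, and $\delta(x,a)$ = set of states reachable in $\mathcal{S}_{\mathrm{dss}}$ from some $q\in x$ by a word $e_as$ with $e_a$ observable, $\ell(e_a)=a$, $s$ unobservable (so $\delta(\emptyset,a)=\emptyset$). $\mathcal{S}_{\mathrm{dss\,obs}}^{\varepsilon}$ is this observer viewed as an LFSA with events $\ell(E_o)\cup\{\varepsilon\}$ (no $\varepsilon$-transitions) and labeling $\ell'$; $\mathrm{CC}(\mathcal{S}_{\varepsilon},\mathcal{S}_{\mathrm{dss\,obs}}^{\varepsilon})$ is formed with events $\ell(E_o)\cup\{\varepsilon\}$ and labeling $\ell'$. *)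

From mathcomp Require Import all_boot.
From mathcomp Require Import boolp.

Set Implicit Arguments.
Unset Strict Implicit.
Unset Printing Implicit Defensive.

(* A labeled finite-state automaton over event alphabet E and output alphabet
   Sig.  lab e = None encodes l(e) = epsilon (unobservable event). *)
Record lfsa (E Sig : finType) := Lfsa {
  st : finType;
  trans : st -> E -> st -> bool;
  init : {set st};
  lab : E -> option Sig
}.
Arguments st {E Sig} l.
Arguments trans {E Sig} l _ _ _.
Arguments init {E Sig} l.
Arguments lab {E Sig} l _.

Section Runs.
Variables (E Sig : finType) (A : lfsa E Sig).

(* A run from q is encoded as the list p of (event, next state) pairs. *)
Fixpoint is_run (q : st A) (p : seq (E * st A)) : bool :=
  match p with
  | [::] => true
  | (e, q') :: p' => trans A q e q' && is_run q' p'
  end.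

Definition run_end (q : st A) (p : seq (E * st A)) : st A := last q (map snd p).
Definition run_word (p : seq (E * st A)) : seq E := map fst p.
Definition run_states (q : st A) (p : seq (E * st A)) : seq (st A) := q :: map snd p.

Definition labw (s : seq E) : seq Sig := pmap (lab A) s.

Definition unobs (e : E) : bool := lab A e == None.

Definition reachable (q : st A) : Prop :=
  exists q0 p, q0 \in init A /\ is_run q0 p /\ run_end q0 p = q.

Definition UR (x : {set st A}) : {set st A} :=
  [set q' | `[< exists q p, q \in x /\ is_run q p /\ all unobs (run_word p)
                            /\ run_end q p = q' >]].

Definition strongly_K_step_opaque (QS : {set st A}) (K : nat) : Prop :=
  forall q0 p1 p2,
    q0 \in init A -> is_run q0 p1 -> run_end q0 p1 \in QS ->
    is_run (run_end q0 p1) p2 -> size (labw (run_word p2)) <= K ->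
    exists q0' p1' p2',
      q0' \in init A /\ is_run q0' p1' /\ is_run (run_end q0' p1') p2' /\
      all (fun r => r \notin QS) (run_states q0' p1' ++ map snd p2') /\
      labw (run_word p1') = labw (run_word p1) /\
      labw (run_word p2') = labw (run_word p2).

(* observer: deterministic automaton on subsets, events option Sig
   (None = the fresh symbol varepsilon, which has no transitions). *)
Definition obs_step (x : {set st A}) (a : Sig) : {set st A} :=
  [set q' | `[< exists q ea q1 p, q \in x /\ lab A ea = Some a /\
              is_run q ((ea, q1) :: p) /\ all unobs (run_word p) /\
              run_end q ((ea, q1) :: p) = q' >]].

Definition observer : lfsa ((option Sig : finType)) Sig :=
  @Lfsa ((option Sig : finType)) Sig {set st A}
    (fun x ev y => match ev with Some a => y == obs_step x a | None => false end)
    [set UR (init A)]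
    id.

End Runs.

Section Constructions.
Variables (E Sig : finType).

Definition S_eps (S : lfsa E Sig) : lfsa ((option Sig : finType)) Sig :=
  @Lfsa ((option Sig : finType)) Sig (st S)
    (fun q a q' => [exists e, trans S q e q' && (lab S e == a)])
    (init S)
    id.

Definition dss_acc (S : lfsa E Sig) (QS : {set st S}) : {set st S} :=
  [set q | `[< exists q0 p, q0 \in init S /\ is_run q0 p /\
             all (fun r => r \notin QS) (run_states q0 p) /\ run_end q0 p = q >]].

Definition S_dss (S : lfsa E Sig) (QS : {set st S}) : lfsa E Sig :=
  @Lfsa E Sig {q : st S | q \in dss_acc QS}
    (fun q e q' => trans S (val q) e (val q'))
    [set q | val q \in init S]
    (lab S).

Definition cc_valid (A B : lfsa E Sig) (ev : option E * option E) : bool :=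
  match ev with
  | (Some e, Some e') => (lab A e != None) && (lab A e == lab B e')
  | (Some e, None) => lab A e == None
  | (None, Some e) => lab B e == None
  | (None, None) => false
  end.

Definition CC (A B : lfsa E Sig) :
  lfsa (((option E * option E)%type : finType)) Sig :=
  @Lfsa (((option E * option E)%type : finType)) Sig
    ((st A * st B)%type : finType)
    (fun z ev z' => cc_valid A B ev &&
       match ev with
       | (Some e, Some e') => trans A z.1 e z'.1 && trans B z.2 e' z'.2
       | (Some e, None) => trans A z.1 e z'.1 && (z'.2 == z.2)
       | (None, Some e) => (z'.1 == z.1) && trans B z.2 e z'.2
       | (None, None) => false
       end)
    (setX (init A) (init B))
    (fun ev => match ev with (Some e, _) => lab A e | (None, _) => None end).

End Constructions.

From mathcomp Require Import all_boot.
From mathcomp Require Import boolp.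

Set Implicit Arguments.
Unset Strict Implicit.
Unset Printing Implicit Defensive.

(* Once the observer of the secret-free part S_dss has read an observation w,
   its estimate is nonempty exactly when w is the observation of some run of S
   from an initial state that never visits QS.  A run of the composition pairs
   a run of S with the estimate of its observation, so both sides of the
   equivalence say: whenever a run of S reaches a secret state and then
   produces at most K more observations, the whole observation is also produced
   by a non-secret run.  Cutting that run where the first part of the
   observation ends gives the two-segment runs of strong K-step opacity. *)

Section RunTheory.
Variables (E Sig : finType) (A : lfsa E Sig).
Implicit Types (q r : st A) (p : seq (E * st A)) (x : {set st A}) (w : seq Sig).

Lemma is_run_cat q p1 p2 :
  is_run q (p1 ++ p2) = is_run q p1 && is_run (run_end q p1) p2.
Proof. by elim: p1 q => [|[e q'] p IH] q //=; rewrite IH andbA. Qed.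

Lemma run_end_cat q p1 p2 : run_end q (p1 ++ p2) = run_end (run_end q p1) p2.
Proof. by rewrite /run_end map_cat last_cat. Qed.

Lemma run_end_cons q e q' p : run_end q ((e, q') :: p) = run_end q' p.
Proof. by []. Qed.

Lemma is_run_rcons q p e r :
  is_run q (rcons p (e, r)) = is_run q p && trans A (run_end q p) e r.
Proof. by rewrite -cats1 is_run_cat /= andbT. Qed.

Lemma run_end_rcons q p e r : run_end q (rcons p (e, r)) = r.
Proof. by rewrite /run_end map_rcons last_rcons. Qed.

Lemma all_unobs_rcons p e r :
  all (unobs A) (run_word (rcons p (e, r))) = all (unobs A) (run_word p) && unobs A e.
Proof. by rewrite /run_word map_rcons all_rcons andbC. Qed.

Lemma run_states_cat q p1 p2 :
  run_states q (p1 ++ p2) = run_states q p1 ++ map snd p2.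
Proof. by rewrite /run_states map_cat. Qed.

Lemma labw_cat p1 p2 :
  labw A (run_word (p1 ++ p2)) = labw A (run_word p1) ++ labw A (run_word p2).
Proof. by rewrite /labw /run_word map_cat pmap_cat. Qed.

Lemma labw_cons e q p :
  labw A (run_word ((e, q) :: p)) =
  if lab A e is Some a then a :: labw A (run_word p) else labw A (run_word p).
Proof. by rewrite /labw /=; case: (lab A e). Qed.

Lemma labw_unobs p : all (unobs A) (run_word p) -> labw A (run_word p) = [::].
Proof.
elim: p => [|[e q] p IH] // /andP [/eqP unobs_e unobs_p].
by rewrite labw_cons unobs_e IH.
Qed.

Lemma labw_eq_cat p u v :
  labw A (run_word p) = u ++ v ->
  exists p1 p2, [/\ p = p1 ++ p2, labw A (run_word p1) = u & labw A (run_word p2) = v].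
Proof.
elim: p u => [|[e q] p IH] [|a u] //=.
- by move=> <-; exists [::], [::].
- by move=> <-; exists [::], ((e, q) :: p).
case lab_e: (lab A e) => [b|] /=.
- case=> <- /(IH u) [p1 [p2 [-> <- <-]]].
  by exists ((e, q) :: p1), p2; rewrite labw_cons lab_e.
- move/(IH (a :: u))=> [p1 [p2 [-> <- <-]]].
  by exists ((e, q) :: p1), p2; rewrite labw_cons lab_e.
Qed.

Definition unobs_closed (x : {set st A}) : Prop :=
  forall r e r', r \in x -> unobs A e -> trans A r e r' -> r' \in x.

Lemma mem_UR x q : q \in x -> q \in UR x.
Proof. by move=> qx; rewrite inE; apply/asboolP; exists q, [::]. Qed.

Lemma UR_unobs_closed x : unobs_closed (UR x).
Proof.
move=> r e r'; rewrite !inE => /asboolP [q [p [qx [run_p [unobs_p <-]]]]] unobs_e tr.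
apply/asboolP; exists q, (rcons p (e, r')).
by rewrite is_run_rcons run_p tr all_unobs_rcons unobs_p unobs_e run_end_rcons.
Qed.

Lemma UR_run x r : r \in UR x ->
  exists q p, [/\ q \in x, is_run q p, labw A (run_word p) = [::] & run_end q p = r].
Proof.
rewrite inE => /asboolP [q [p [qx [run_p [unobs_p <-]]]]].
by exists q, p; rewrite labw_unobs.
Qed.

Lemma obs_foldl_run x w r : r \in foldl (@obs_step _ _ A) x w ->
  exists q p, [/\ q \in x, is_run q p, labw A (run_word p) = w & run_end q p = r].
Proof.
elim: w x => [|a w IH] x /=; first by move=> rx; exists r, [::].
case/IH=> q1 [p1 []]; rewrite inE => /asboolP [q [ea [q' [p [qx [lab_ea [run_p [unobs_p end_p]]]]]]]].
move=> run_p1 <- <-; exists q, (((ea, q') :: p) ++ p1).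
rewrite is_run_cat run_p end_p run_p1 run_end_cat end_p labw_cat labw_cons lab_ea.
by rewrite labw_unobs.
Qed.

Lemma obs_step_unobs_closed x a : unobs_closed (obs_step x a).
Proof.
move=> r e r'; rewrite !inE => /asboolP [q [ea [q1 [p [qx [lab_ea [run_p [unobs_p end_p]]]]]]]].
move=> unobs_e tr; apply/asboolP; exists q, ea, q1, (rcons p (e, r')).
rewrite -rcons_cons is_run_rcons run_p end_p tr all_unobs_rcons unobs_p unobs_e.
by rewrite run_end_rcons.
Qed.

Lemma run_end_obs_foldl x q p : q \in x -> unobs_closed x -> is_run q p ->
  run_end q p \in foldl (@obs_step _ _ A) x (labw A (run_word p)).
Proof.
elim: p q x => [|[e q'] p IH] q x // qx closed_x /andP [tr run_p].
rewrite run_end_cons labw_cons; case lab_e: (lab A e) => [a|] /=.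
- apply: IH run_p; last exact: obs_step_unobs_closed.
  by rewrite inE; apply/asboolP; exists q, e, q', [::]; rewrite /= tr.
- by apply: IH run_p => //; apply: closed_x qx _ tr; rewrite /unobs lab_e.
Qed.

End RunTheory.

Section ObserverComposition.
Variables (E Sig : finType) (S B : lfsa E Sig).
Local Notation C := (CC (S_eps S) (observer B)).
Implicit Types (q : st S) (pS : seq (E * st S)) (z : st C).

Lemma CC_run_end_obs z p : is_run z p ->
  (run_end z p).2 = foldl (@obs_step _ _ B) z.2 (labw C (run_word p)).
Proof.
elim: p z => [|[ev z'] p IH] z // /andP [tr run_p].
rewrite run_end_cons (IH _ run_p) labw_cons.
move: tr; case: ev => [[[a|]|] [[b|]|]] //=.
- by case/and3P => /eqP [<-] _ /eqP ->.
- by case/andP => _ /eqP ->.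
- by rewrite andbF.
Qed.

Lemma CC_run_proj z p : is_run z p ->
  exists pS, [/\ is_run (A:=S) z.1 pS, run_end (A:=S) z.1 pS = (run_end z p).1
               & labw S (run_word pS) = labw C (run_word p)].
Proof.
elim: p z => [|[ev z'] p IH] z; first by exists [::].
case/andP=> tr /IH [pS [run_pS end_pS lab_pS]].
rewrite run_end_cons labw_cons.
have step e : trans S z.1 e z'.1 ->
    exists pS', [/\ is_run (A:=S) z.1 pS', run_end (A:=S) z.1 pS' = (run_end z' p).1
                  & labw S (run_word pS') =
                    if lab S e is Some a then a :: labw C (run_word p)
                    else labw C (run_word p)].
  move=> tr_e; exists ((e, z'.1) :: pS).
  by rewrite labw_cons run_end_cons /= tr_e run_pS end_pS lab_pS.
move: tr; case: ev => [[[a|]|] [[b|]|]] //=.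
- case/and3P=> _ /existsP [e /andP [tr_e /eqP lab_e]] _.
  by have := step e tr_e; rewrite lab_e.
- case/andP=> /existsP [e /andP [tr_e /eqP lab_e]] _.
  by have := step e tr_e; rewrite lab_e.
- by rewrite andbF.
Qed.

Lemma CC_run_lift q (x : {set st B}) pS : is_run q pS ->
  exists p, [/\ is_run ((q, x) : st C) p,
                run_end ((q, x) : st C) p =
                  (run_end q pS, foldl (@obs_step _ _ B) x (labw S (run_word pS)))
              & labw C (run_word p) = labw S (run_word pS)].
Proof.
elim: pS q x => [|[e q'] pS IH] q x; first by exists [::].
case/andP=> tr run_pS; rewrite run_end_cons labw_cons.
have tr_eps : [exists e', trans S q e' q' && (lab S e' == lab S e)].
  by apply/existsP; exists e; rewrite tr eqxx.
case lab_e: (lab S e) => [a|] /=; rewrite lab_e in tr_eps.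
- have [p [run_p end_p lab_p]] := IH q' (obs_step x a) run_pS.
  exists (((Some (Some a), Some (Some a)), (q', obs_step x a)) :: p).
  by rewrite labw_cons run_end_cons end_p lab_p /= tr_eps run_p !eqxx.
- have [p [run_p end_p lab_p]] := IH q' x run_pS.
  exists (((Some None, None), (q', x)) :: p).
  by rewrite labw_cons run_end_cons end_p lab_p /= tr_eps run_p !eqxx.
Qed.

End ObserverComposition.

Section DeletedSecretStates.
Variables (E Sig : finType) (S : lfsa E Sig) (QS : {set st S}).
Local Notation D := (S_dss QS).
Local Notation nonsecret := (fun r => r \notin QS).
Implicit Types (q : st S) (p : seq (E * st S)) (w : seq Sig).

Definition nonsecret_word w : Prop :=
  exists q0 p, [/\ q0 \in init S, is_run q0 p, all nonsecret (run_states q0 p)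
                 & labw S (run_word p) = w].

Lemma strongly_K_step_opaqueP K :
  strongly_K_step_opaque QS K <->
  (forall q0 p1 p2, q0 \in init S -> is_run q0 p1 -> run_end q0 p1 \in QS ->
     is_run (run_end q0 p1) p2 -> size (labw S (run_word p2)) <= K ->
     nonsecret_word (labw S (run_word p1) ++ labw S (run_word p2))).
Proof.
split=> opaque q0 p1 p2 q0_init run_p1 secret run_p2 small.
- have [q0' [p1' [p2' [q0'_init [run_p1' [run_p2' [all_p' [lab_p1' lab_p2']]]]]]]] :=
    opaque q0 p1 p2 q0_init run_p1 secret run_p2 small.
  exists q0', (p1' ++ p2').
  by rewrite is_run_cat run_p1' run_states_cat labw_cat lab_p1' lab_p2'.
- have [q0' [p [q0'_init run_p all_p]]] := opaque q0 p1 p2 q0_init run_p1 secret run_p2 small.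
  case/labw_eq_cat=> p1' [p2' [def_p lab_p1' lab_p2']].
  move: run_p all_p; rewrite def_p is_run_cat run_states_cat => /andP [run_p1' run_p2'] all_p.
  by exists q0', p1', p2'.
Qed.

Lemma S_dss_nonsecret (r : st D) : val r \notin QS.
Proof.
have := valP r; rewrite inE => /asboolP [q0 [p [_ [_ [all_p <-]]]]].
by move/allP: all_p; apply; apply: mem_last.
Qed.

Lemma dss_acc_init q : q \in init S -> q \notin QS -> q \in dss_acc QS.
Proof. by move=> q_init q_ns; rewrite inE; apply/asboolP; exists q, [::]; rewrite /= q_ns. Qed.

Lemma dss_acc_step q e r :
  q \in dss_acc QS -> trans S q e r -> r \notin QS -> r \in dss_acc QS.
Proof.
rewrite !inE => /asboolP [q0 [p [q0_init [run_p [all_p end_p]]]]] tr r_ns.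
apply/asboolP; exists q0, (rcons p (e, r)).
rewrite is_run_rcons run_p end_p tr run_end_rcons.
by rewrite /run_states map_rcons -rcons_cons all_rcons r_ns all_p.
Qed.

Lemma S_dss_run_proj (q : st D) (pD : seq (E * st D)) : is_run q pD ->
  exists p, [/\ is_run (val q) p, run_end (val q) p = val (run_end q pD),
              labw S (run_word p) = labw D (run_word pD) & all nonsecret (map snd p)].
Proof.
elim: pD q => [|[e r] pD IH] q; first by exists [::].
case/andP=> tr /IH [p [run_p end_p lab_p all_p]].
exists ((e, val r) :: p); split; first exact/andP.
- by rewrite !run_end_cons.
- by rewrite !labw_cons lab_p.
- by rewrite /= all_p S_dss_nonsecret.
Qed.

Lemma S_dss_run_lift q (q_acc : q \in dss_acc QS) p :
  is_run q p -> all nonsecret (map snd p) ->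
  exists pD : seq (E * st D), [/\ is_run (Sub q q_acc : st D) pD,
    val (run_end (Sub q q_acc : st D) pD) = run_end q p
    & labw D (run_word pD) = labw S (run_word p)].
Proof.
elim: p q q_acc => [|[e r] p IH] q q_acc; first by exists [::].
case/andP=> tr run_p /andP [r_ns all_p].
have r_acc := dss_acc_step q_acc tr r_ns.
have [pD [run_pD end_pD lab_pD]] := IH r r_acc run_p all_p.
exists ((e, Sub r r_acc) :: pD); split; first exact/andP.
- by rewrite !run_end_cons.
- by rewrite !labw_cons lab_pD.
Qed.

Lemma S_dss_estimate_neq0 w :
  foldl (@obs_step _ _ D) (UR (init D)) w != set0 <-> nonsecret_word w.
Proof.
split.
- case/set0Pn=> r /obs_foldl_run [q [pD [q_UR run_pD lab_pD _]]].
  have [q0 [pD0 [q0_init run_pD0 lab_pD0 end_pD0]]] := UR_run q_UR.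
  have run_pD' : is_run q0 (pD0 ++ pD) by rewrite is_run_cat run_pD0 end_pD0.
  have [p [run_p _ lab_p all_p]] := S_dss_run_proj run_pD'.
  exists (val q0), p; split => //; first by move: q0_init; rewrite inE.
    by rewrite /run_states /= S_dss_nonsecret.
  by rewrite lab_p labw_cat lab_pD0 lab_pD.
- case=> q0 [p [q0_init run_p /andP [q0_ns all_p] <-]].
  have q0_acc := dss_acc_init q0_init q0_ns.
  have [pD [run_pD _ <-]] := S_dss_run_lift q0_acc run_p all_p.
  apply/set0Pn; exists (run_end (Sub q0 q0_acc : st D) pD).
  apply: run_end_obs_foldl run_pD; last exact: UR_unobs_closed.
  by apply: mem_UR; rewrite inE.
Qed.

End DeletedSecretStates.

Unset Implicit Arguments.

Theorem theorem11 (E Sig : finType) (S : lfsa E Sig) (QS : {set st S})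
    (K : nat) (hK : 0 < K) :
  strongly_K_step_opaque QS K <->
  (forall z : st (CC (S_eps S) (observer (S_dss QS))),
     reachable z -> z.1 \in QS ->
     z.2 != set0 /\
     (forall p, is_run z p ->
        size (labw (CC (S_eps S) (observer (S_dss QS))) (run_word p)) <= K ->
        (run_end z p).2 != set0)).
Proof.
set C := CC (S_eps S) (observer (S_dss QS)).
rewrite strongly_K_step_opaqueP; split.
- move=> opaque z [[q0 x0] [pc [/setXP [q0_init /set1P x0_UR] [run_pc end_pc]]]] secret.
  have estimate_neq0 p : is_run z p -> size (labw C (run_word p)) <= K ->
      (run_end z p).2 != set0.
    move=> run_p small; rewrite (CC_run_end_obs run_p) -end_pc (CC_run_end_obs run_pc).
    rewrite x0_UR -foldl_cat; apply/S_dss_estimate_neq0.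
    have [pS1 [run_pS1 end_pS1 <-]] := CC_run_proj run_pc.
    have [pS2 [run_pS2 _ lab_pS2]] := CC_run_proj run_p.
    rewrite /= end_pc in end_pS1.
    by rewrite -lab_pS2; apply: opaque q0_init run_pS1 _ _ _; rewrite ?end_pS1 ?lab_pS2.
  by split=> //; apply: (estimate_neq0 [::]).
- move=> estimate_neq0 q0 p1 p2 q0_init run_p1 secret run_p2 small.
  set x0 := UR (init (S_dss QS)).
  have [pc1 [run_pc1 end_pc1 _]] := CC_run_lift x0 run_p1.
  have [pc2 [run_pc2 end_pc2 lab_pc2]] :=
    CC_run_lift (foldl (@obs_step _ _ (S_dss QS)) x0 (labw S (run_word p1))) run_p2.
  have reach : reachable (run_end ((q0, x0) : st C) pc1).
    by exists (q0, x0), pc1; rewrite !inE q0_init eqxx.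
  have secret' : (run_end ((q0, x0) : st C) pc1).1 \in QS by rewrite end_pc1.
  have [_ /(_ pc2)] := estimate_neq0 _ reach secret'.
  rewrite end_pc1 lab_pc2 end_pc2 -foldl_cat => /(_ run_pc2 small).
  by move/S_dss_estimate_neq0.
Qed.
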